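(* For all integers $n,p,m\ge0$, $$\sum_{k=0}^n\binom{k+p}{k}H_{n-k}(m)\,(H_{k+p}-H_p)=\sum_{k=0}^n\binom{k+p}{k}H_{n-k}(m+1).$$ In particular, $\sum_{k=0}^n\binom{k+p}{k}(H_{k+p}-H_p)=\sum_{k=0}^n\binom{k+p}{k}H_{n-k}$ and $\sum_{k=0}^n\binom{k+p}{k}H_{n-k}(H_{k+p}-H_p)=\sum_{k=0}^n\binom{k+p}{k}\left(H_{n-k}^2-H_{n-k}^{(2)}\right)$.
   Context: For integers $m\ge 1$, $n\ge 0$, the multiple harmonic-like numbers are $H_n(m)=\sum_{1\le k_1+k_2+\cdots+k_m\le n}\frac{1}{k_1k_2\cdots k_m}$ (sum over positive integers $k_1,\dots,k_m$), with $H_n(0)=1$ for $n\ge 0$ and $H_0(m)=0$ for $m\ge1$. Equivalently, $\sum_{n\ge0}H_n(m)z^n=\frac{(-\ln(1-z))^m}{1-z}$. $H_n=\sum_{k=1}^n\frac1k$, $H_n^{(2)}=\sum_{k=1}^n\frac1{k^2}$. *)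

From mathcomp Require Import all_boot all_order all_algebra.
Set Implicit Arguments. Unset Strict Implicit. Unset Printing Implicit Defensive.
Import Order.TTheory GRing.Theory Num.Theory.
Local Open Scope ring_scope.

Definition harm (n : nat) : rat := \sum_(1 <= i < n.+1) (i%:R)^-1.
Definition harm2 (n : nat) : rat := \sum_(1 <= i < n.+1) (i%:R ^+ 2)^-1.

(* multiple harmonic-like numbers H_n(m):
   sum over positive integers k_1..k_m with 1 <= k_1+...+k_m <= n of
   1/(k_1...k_m); each k_i <= n so we range over {ffun 'I_m -> 'I_n.+1}. *)
Definition mharm (n m : nat) : rat :=
  if m is 0 then 1 else
  \sum_(k : {ffun 'I_m -> 'I_n.+1} |
          [forall i, (0 < (k i : nat))%N] &&
          (1 <= \sum_(i < m) (k i : nat) <= n)%N)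
     (\prod_(i < m) ((k i : nat)%:R : rat))^-1.

From mathcomp Require Import all_boot all_order all_algebra.
From mathcomp Require Import zify ring.
Import Order.TTheory GRing.Theory Num.Theory.
Local Open Scope ring_scope.

(* Everything is a statement about Cauchy products of sequences:
   [mharm _ m] is the m-fold convolution of k |-> 1/k with the constant 1,
   and [C(k+p,k) (H_(k+p) - H_p)] is the convolution of k |-> C(k+p,k) with
   k |-> 1/k, as both sides satisfy Pascal's recurrence in (p, k).  Moving the
   factor 1/k from one side of the product to the other by associativity and
   commutativity of convolution turns H_n(m) into H_n(m+1). *)

Section Convolution.
Variable R : comNzRingType.
Implicit Types f g h : nat -> R.

Definition conv f g (n : nat) : R := \sum_(k < n.+1) f k * g (n - k)%N.

Lemma coef_poly_mul_conv N f g k : (k < N)%N ->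
  (\poly_(i < N) f i * \poly_(i < N) g i)`_k = conv f g k.
Proof.
move=> ltkN; rewrite coefM; apply: eq_bigr => j _; rewrite !coef_poly.
have ltjk := ltn_ord j.
by rewrite ifT ?ifT //; lia.
Qed.

Lemma convC f g n : conv f g n = conv g f n.
Proof.
by rewrite -(@coef_poly_mul_conv n.+1 f g n) // mulrC coef_poly_mul_conv.
Qed.

Lemma convA f g h n : conv (conv f g) h n = conv f (conv g h) n.
Proof.
transitivity ((\poly_(i < n.+1) f i * \poly_(i < n.+1) g i * \poly_(i < n.+1) h i)`_n);
  last rewrite -mulrA.
all: rewrite coefM; apply: eq_bigr => j _; have ltjn := ltn_ord j.
all: by rewrite coef_poly_mul_conv ?coef_poly ?ifT //; lia.
Qed.

Lemma eq_conv f f' g g' n :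
    (forall k, (k <= n)%N -> f k = f' k) -> (forall k, (k <= n)%N -> g k = g' k) ->
  conv f g n = conv f' g' n.
Proof.
move=> eq_f eq_g; apply: eq_bigr => j _; have ltjn := ltn_ord j.
by rewrite eq_f ?eq_g //; lia.
Qed.

Lemma conv_pascal (a : nat -> nat -> R) f p k :
    (forall k, a p.+1 k.+1 = a p k.+1 + a p.+1 k) -> a p.+1 0%N = a p 0%N ->
  conv (a p.+1) f k.+1 = conv (a p) f k.+1 + conv (a p.+1) f k.
Proof.
move=> pascal a0; rewrite /conv big_ord_recl [X in _ = X + _]big_ord_recl a0.
under eq_bigr do rewrite lift0 /= pascal mulrDl subSS.
by rewrite big_split addrA.
Qed.

End Convolution.

Arguments conv {R} f g n.

Lemma eq_pascal (R : nmodType) (a b : nat -> nat -> R) :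
    (forall p k, a p.+1 k.+1 = a p k.+1 + a p.+1 k) ->
    (forall p k, b p.+1 k.+1 = b p k.+1 + b p.+1 k) ->
    (forall k, a 0%N k = b 0%N k) -> (forall p, a p 0%N = b p 0%N) ->
  forall p k, a p k = b p k.
Proof.
move=> pascal_a pascal_b a0k ap0; elim=> [//|p IHp]; elim=> [//|k IHk].
by rewrite pascal_a pascal_b IHp IHk.
Qed.

Section FfunCons.
Context {T : finType} {m : nat}.

Definition ffcons (h : T) (t : {ffun 'I_m -> T}) : {ffun 'I_m.+1 -> T} :=
  [ffun i => if unlift ord0 i is Some j then t j else h].

Lemma ffcons0 h t : ffcons h t ord0 = h.
Proof. by rewrite ffunE unlift_none. Qed.

Lemma ffconsS h t j : ffcons h t (lift ord0 j) = t j.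
Proof. by rewrite ffunE liftK. Qed.

Lemma big_ffcons (R : Type) (idx : R) (op : Monoid.law idx) (F : T -> R) h t :
  \big[op/idx]_(i < m.+1) F (ffcons h t i) = op (F h) (\big[op/idx]_(i < m) F (t i)).
Proof. by rewrite big_ord_recl ffcons0; under eq_bigr do rewrite ffconsS. Qed.

Lemma forall_ffcons (a : pred T) h t :
  [forall i, a (ffcons h t i)] = a h && [forall i, a (t i)].
Proof.
apply/forallP/andP => [a_ht | [a_h /forallP a_t] i].
  by split; [have := a_ht ord0 | apply/forallP => j; have := a_ht (lift ord0 j)];
    rewrite ?ffcons0 ?ffconsS.
by case: (unliftP ord0 i) => [j ->|->]; rewrite ?ffconsS ?ffcons0.
Qed.

Lemma big_ffun_ffcons (R : Type) (idx : R) (op : Monoid.com_law idx)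
    (P : pred {ffun 'I_m.+1 -> T}) (F : {ffun 'I_m.+1 -> T} -> R) :
  \big[op/idx]_(f | P f) F f =
  \big[op/idx]_(h : T) \big[op/idx]_(t | P (ffcons h t)) F (ffcons h t).
Proof.
rewrite (reindex (fun ht : T * {ffun 'I_m -> T} => ffcons ht.1 ht.2)) /=.
  by rewrite pair_big_dep.
exists (fun f => (f ord0, [ffun j => f (lift ord0 j)])) => [[h t] _ | f _] /=.
  by rewrite ffcons0; congr pair; apply/ffunP => j; rewrite ffunE ffconsS.
by apply/ffunP => i; rewrite ffunE; case: unliftP => [j ->|->] //; rewrite ffunE.
Qed.

End FfunCons.

(* [recip 0 = 0], since [0^-1 = 0] in a field. *)
Definition recip (k : nat) : rat := (k%:R)^-1.

Fixpoint mharm_conv (m : nat) : nat -> rat :=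
  if m is m'.+1 then conv recip (mharm_conv m') else fun=> 1.

(* Peeling off the first coordinate [h] leaves a sum over [m] positive
   coordinates bounded by [r - h]; the term [h = 0] vanishes with [recip 0]. *)
Lemma sum_ffun_prod_inv m B r : (r <= B)%N ->
  \sum_(k : {ffun 'I_m -> 'I_B.+1} |
          [forall i, (0 < k i)%N] && (\sum_(i < m) (k i : nat) <= r)%N)
     (\prod_(i < m) ((k i : nat)%:R : rat))^-1 = mharm_conv m r.
Proof.
elim: m r => [|m IHm] r leRB /=.
  rewrite (eq_bigl xpredT) => [|k]; last first.
    by rewrite big_ord0 andbT; apply/forallP => -[].
  under eq_bigr do rewrite big_ord0 invr1.
  by rewrite sumr_const card_ffun !card_ord expn0.
rewrite big_ffun_ffcons /conv.
rewrite (big_ord_widen B.+1 (fun k => recip k * mharm_conv m (r - k)%N)) //.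
rewrite [RHS]big_mkcond /=; apply: eq_bigr => h _.
under eq_bigl do rewrite (forall_ffcons (fun x : 'I_B.+1 => 0 < x)%N) big_ffcons.
under eq_bigr do
  rewrite (@big_ffcons _ _ _ _ _ (fun x : 'I_B.+1 => ((x : nat)%:R : rat))) invfM.
rewrite ltnS; case: (leqP h r) => [le_hr | lt_rh]; last first.
  by rewrite big_pred0 // => t; case: (_ < _)%N; case: [forall i, _] => //=; lia.
have [h0|_] := posnP h; first by rewrite big_pred0 h0 /recip ?invr0 ?mul0r.
under eq_bigl do rewrite -leq_subRL //.
by rewrite -mulr_sumr IHm //; lia.
Qed.

Lemma mharmE n m : mharm n m = mharm_conv m n.
Proof.
case: m => [//|m]; rewrite /mharm -(@sum_ffun_prod_inv m.+1 n n (leqnn n)).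
apply: eq_bigl => k; case k_gt0: [forall i, _] => //=.
by have := forallP k_gt0 ord0; rewrite big_ord_recl; lia.
Qed.

Lemma harmS n : harm n.+1 = harm n + (n.+1%:R)^-1.
Proof. by rewrite /harm big_nat_recr. Qed.

Lemma mharm_conv1 n : mharm_conv 1 n = harm n.
Proof.
rewrite /= /conv /harm big_add1 big_mkord big_ord_recl /recip invr0 mul0r add0r.
by apply: eq_bigr => i _; rewrite mulr1.
Qed.

(* [negbin p] is the coefficient sequence of [(1 - z)^-(p+1)]. *)
Definition negbin (p k : nat) : rat := 'C(k + p, k)%:R.

Definition negbin_harm (p k : nat) : rat := negbin p k * (harm (k + p) - harm p).

Lemma negbin_pascal p k : negbin p.+1 k.+1 = negbin p k.+1 + negbin p.+1 k.
Proof. by rewrite /negbin !addSn binS !addnS natrD. Qed.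

Lemma negbin_harm_pascal p k :
  negbin_harm p.+1 k.+1 = negbin_harm p k.+1 + negbin_harm p.+1 k.
Proof.
have k_neq0 : k.+1%:R != 0 :> rat by rewrite pnatr_eq0.
have negbin_lower : negbin p k.+1 = p.+1%:R * negbin p.+1 k / k.+1%:R.
  rewrite -[LHS](mulfK k_neq0) /negbin -!natrM.
  by rewrite mulnC addSnnS mul_bin_left addKn.
have negbin_diag : negbin p.+1 k.+1 = (k.+1 + p.+1)%:R * negbin p.+1 k / k.+1%:R.
  rewrite -[LHS](mulfK k_neq0) /negbin -!natrM.
  by rewrite mulnC -mul_bin_diag addSn.
have harm_kp : harm (k.+1 + p.+1) = harm (k + p.+1) + ((k.+1 + p.+1)%:R)^-1.
  by rewrite addSn harmS.
rewrite /negbin_harm harm_kp [(k.+1 + p)%N]addSnnS harmS negbin_lower negbin_diag natrD.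
by field; rewrite !nat1r -natrD !pnatr_eq0 addnS.
Qed.

Lemma negbin_harm_conv p k : negbin_harm p k = conv (negbin p) recip k.
Proof.
move: p k; apply: eq_pascal => [p k | p k | k | p].
- exact: negbin_harm_pascal.
- by apply: conv_pascal => [{}k|]; rewrite ?negbin_pascal // /negbin !bin0.
- rewrite /negbin_harm /negbin addn0 binn mul1r [harm 0]big_geq // subr0.
  by rewrite -mharm_conv1 /= convC; apply: eq_conv => // j _; rewrite addn0 binn.
- by rewrite /negbin_harm subrr mulr0 /conv big_ord1 /recip invr0 mulr0.
Qed.

Lemma sum_negbin_harm_mharm_conv n p m :
  \sum_(0 <= k < n.+1) negbin p k * mharm_conv m (n - k) * (harm (k + p) - harm p) =
  \sum_(0 <= k < n.+1) negbin p k * mharm_conv m.+1 (n - k).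
Proof.
rewrite !big_mkord.
under eq_bigr => k _ do rewrite mulrAC -/(negbin_harm p k) negbin_harm_conv.
exact: convA.
Qed.

Lemma harm2S n : harm2 n.+1 = harm2 n + (n.+1%:R ^+ 2)^-1.
Proof. by rewrite /harm2 big_nat_recr. Qed.

Lemma recip_mul x y : (0 < x)%N -> (0 < y)%N ->
  recip x * recip y = recip (x + y) * (recip x + recip y).
Proof.
move=> x_gt0 y_gt0; rewrite /recip natrD.
by field; rewrite -natrD !pnatr_eq0 -!lt0n addn_gt0 x_gt0 y_gt0.
Qed.

Lemma conv_recip_recipS j : conv recip recip j.+1 = 2%:R * recip j.+1 * harm j.
Proof.
rewrite /conv -(big_mkord xpredT (fun i => recip i * recip (j.+1 - i))).
rewrite big_nat_recl // big_nat_recr //= subnn /recip invr0 mul0r mulr0 add0r addr0.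
rewrite -/recip.
rewrite (eq_big_nat _ _ (F2 := fun i => recip j.+1 * (recip i.+1 + recip (j - i))));
  last by move=> i /andP[_ lt_ij]; rewrite subSS recip_mul ?subn_gt0 // addSn subnKC 1?ltnW.
rewrite -mulr_sumr big_split /= [X in _ + X]big_nat_rev /=.
under [X in _ + X]eq_big_nat => i /andP[_ lt_ij] do rewrite add0n subKn //.
by rewrite /recip /harm big_add1 /=; ring.
Qed.

Lemma mharm_conv2 n : mharm_conv 2 n = harm n ^+ 2 - harm2 n.
Proof.
have -> : mharm_conv 2 n = \sum_(k < n.+1) conv recip recip k.
  by rewrite /= -convA; apply: eq_bigr => k _; rewrite mulr1.
elim: n => [|n IHn].
  rewrite big_ord1 /conv big_ord1 /recip invr0 mulr0.
  by rewrite /harm /harm2 !big_geq // expr0n subr0.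
rewrite big_ord_recr /= IHn conv_recip_recipS harmS harm2S /recip -exprVn.
ring.
Qed.

Theorem theorem10 :
  (forall n p m : nat,
     \sum_(0 <= k < n.+1) ('C(k + p, k)%:R * mharm (n - k) m * (harm (k + p) - harm p))
     = \sum_(0 <= k < n.+1) ('C(k + p, k)%:R * mharm (n - k) m.+1))
  /\
  (forall n p : nat,
     \sum_(0 <= k < n.+1) ('C(k + p, k)%:R * (harm (k + p) - harm p))
     = \sum_(0 <= k < n.+1) ('C(k + p, k)%:R * harm (n - k)))
  /\
  (forall n p : nat,
     \sum_(0 <= k < n.+1) ('C(k + p, k)%:R * harm (n - k) * (harm (k + p) - harm p))
     = \sum_(0 <= k < n.+1) ('C(k + p, k)%:R * (harm (n - k) ^+ 2 - harm2 (n - k)))).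
Proof.
split; [|split] => n p *.
- under eq_bigr do rewrite mharmE.
  rewrite sum_negbin_harm_mharm_conv.
  by apply: eq_bigr => k _; rewrite mharmE.
- under eq_bigr do rewrite -[X in X * _]mulr1.
  rewrite (sum_negbin_harm_mharm_conv n p 0).
  by apply: eq_bigr => k _; rewrite mharm_conv1.
- under eq_bigr do rewrite -mharm_conv1.
  rewrite sum_negbin_harm_mharm_conv.
  by apply: eq_bigr => k _; rewrite mharm_conv2.
Qed.
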